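(* There exists a map of multipointed $d$-spaces $f:X\to Y$ whose underlying continuous map $f:|X|\to|Y|$ is a homeomorphism but such that $\vec{\mathrm{Sp}}(f):\vec{\mathrm{Sp}}(X)\to\vec{\mathrm{Sp}}(Y)$ is not an isomorphism of directed spaces.
   Context: $\mathcal{M}(1,1)$: non-decreasing surjective continuous maps $[0,1]\to[0,1]$; $\mathcal{I}(1)$: non-decreasing continuous maps $[0,1]\to[0,1]$; $\mu_\ell(t)=t/\ell$. A multipointed $d$-space is $(|X|,X^0,\mathbb{P}^{\mathrm{top}}X)$: a space, a set of states $X^0\subset|X|$, a set of continuous maps $[0,1]\to|X|$ (execution paths) with endpoints in $X^0$, closed under precomposition by $\mathcal{M}(1,1)$ and normalized composition $\gamma_1*_N\gamma_2$ ($\gamma_1(2t)$ on $[0,1/2]$, $\gamma_2(2t-1)$ on $[1/2,1]$); maps are continuous maps preserving states and execution paths. A directed space is $(|Y|,d(Y))$ with $d(Y)$ a set of paths $[0,1]\to|Y|$ containing constants, closed under normalized composition and precomposition by $\mathcal{I}(1)$; morphisms preserve directed paths. $\vec{\mathrm{Sp}}(X)$ is the directed space on $|X|$ whose directed paths are the constant paths and the Moore concatenations $(\gamma_1\phi_1\mu_{\ell_1})*\dots*(\gamma_n\phi_n\mu_{\ell_n})$ with $\ell_i>0$, $\sum\ell_i=1$, $\gamma_i$ execution paths, $\phi_i\in\mathcal{I}(1)$; $\vec{\mathrm{Sp}}(f)$ has the same underlying map as $f$. *)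

From HB Require Import structures.
From mathcomp Require Import all_boot all_order all_algebra.
From mathcomp Require Import all_classical all_reals all_analysis.
Set Implicit Arguments. Unset Strict Implicit. Unset Printing Implicit Defensive.
Import Order.TTheory GRing.Theory Num.Theory.
Local Open Scope classical_set_scope.
Local Open Scope ring_scope.

Import numFieldNormedType.Exports.
Section Defs.
Variable R : realType.

Definition I01_top : topologicalType := set_type (`[0, 1]%classic : set R).
Definition I01 : Type := I01_top.

Definition vI (s : I01) : R := set_val s.

Lemma clamp_in (t : R) : (`[0, 1]%classic : set R) (Num.min 1 (Num.max 0 t)).
Proof.
rewrite /= in_itv /=; apply/andP; split.
  by rewrite le_min ler01 le_max lexx.
by rewrite ge_min lexx.
Qed.

Definition clamp (t : R) : I01_top := exist _ (Num.min 1 (Num.max 0 t)) (mem_set (clamp_in t)).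

Definition I0 : I01_top := clamp 0.
Definition I1 : I01_top := clamp 1.

Definition in_I1 (phi : I01_top -> I01_top) : Prop :=
  continuous phi /\ (forall s t : I01_top, vI s <= vI t -> vI (phi s) <= vI (phi t)).

Definition in_M11 (phi : I01_top -> I01_top) : Prop :=
  in_I1 phi /\ (forall u : I01_top, exists s, phi s = u).

Definition ncomp (T : Type) (g1 g2 : I01_top -> T) : I01_top -> T :=
  fun s => if vI s <= 2^-1 then g1 (clamp (2 * vI s)) else g2 (clamp (2 * vI s - 1)).

Record mdspace := MDSpace {
  md_space :> topologicalType;
  md_states : set md_space;
  md_paths : set (I01_top -> md_space);
  md_paths_cont : forall g, md_paths g -> continuous g;
  md_paths_ends : forall g, md_paths g -> md_states (g I0) /\ md_states (g I1);
  md_paths_reparam : forall g phi, md_paths g -> in_M11 phi -> md_paths (g \o phi);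
  md_paths_ncomp : forall g1 g2, md_paths g1 -> md_paths g2 -> g1 I1 = g2 I0 ->
                   md_paths (ncomp g1 g2)
}.

Definition is_mdmap (X Y : mdspace) (f : X -> Y) : Prop :=
  continuous f /\ (forall x : X, @md_states X x -> @md_states Y (f x)) /\
  (forall g : I01_top -> X, @md_paths X g -> @md_paths Y (f \o g)).

Definition is_homeomorphism (X Y : topologicalType) (f : X -> Y) : Prop :=
  continuous f /\ exists g : Y -> X, continuous g /\ cancel f g /\ cancel g f.

Definition is_directed_space (T : topologicalType) (d : set (I01_top -> T)) : Prop :=
  (forall g, d g -> continuous g) /\
  (forall x : T, d (fun _ => x)) /\
  (forall g1 g2, d g1 -> d g2 -> g1 I1 = g2 I0 -> d (ncomp g1 g2)) /\
  (forall g phi, d g -> in_I1 phi -> d (g \o phi)).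

Definition is_dmap (T U : topologicalType) (dT : set (I01_top -> T))
  (dU : set (I01_top -> U)) (f : T -> U) : Prop :=
  continuous f /\ (forall g, dT g -> dU (f \o g)).

Definition is_dspace_iso (T U : topologicalType) (dT : set (I01_top -> T))
  (dU : set (I01_top -> U)) (f : T -> U) : Prop :=
  is_dmap dT dU f /\
  exists g : U -> T, is_dmap dU dT g /\ cancel f g /\ cancel g f.

(** Moore concatenation (g_0 phi_0 mu_{l_0}) * ... * (g_{n-1} phi_{n-1} mu_{l_{n-1}})
    of an n-tuple (n >= 1) of execution paths g_i reparametrized by phi_i in I(1),
    with lengths l_i > 0 summing to 1.  The i-th piece occupies
    [L_i, L_i + l_i] with L_i = l_0 + ... + l_{i-1}; consecutive pieces must
    match at their endpoints for the Moore composition to be defined. *)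
Definition moore_start (n : nat) (l : 'I_n -> R) (i : 'I_n) : R :=
  \sum_(j < n | (j < i)%N) l j.

Definition is_moore_concat (X : mdspace) (delta : I01_top -> X) : Prop :=
  exists (n : nat) (l : 'I_n -> R) (g : 'I_n -> (I01_top -> X))
         (phi : 'I_n -> (I01_top -> I01_top)),
    (0 < n)%N /\
    (forall i, 0 < l i) /\ (\sum_(i < n) l i = 1) /\
    (forall i, @md_paths X (g i)) /\ (forall i, in_I1 (phi i)) /\
    (forall (i j : 'I_n), (j = i.+1 :> nat) -> g i (phi i I1) = g j (phi j I0)) /\
    (forall (i : 'I_n) (t : I01_top),
        moore_start l i <= vI t <= moore_start l i + l i ->
        delta t = g i (phi i (clamp ((vI t - moore_start l i) / l i)))).

Definition Sp_paths (X : mdspace) : set (I01_top -> X) :=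
  fun delta => (exists x : X, delta = fun _ => x) \/ is_moore_concat delta.

End Defs.
Arguments Sp_paths {R} X _.

From HB Require Import structures.
From mathcomp Require Import all_boot all_order all_algebra.
From mathcomp Require Import all_classical all_reals all_analysis.

(* Take for |X| = |Y| the two-point indiscrete space, on which every map
   [0,1] -> |Y| is continuous.  Let X have no execution paths and Y have every
   map as an execution path; the identity X -> Y is then a map of multipointed
   d-spaces and a homeomorphism.  Sp(X) only has the constant directed paths,
   whereas every execution path of Y, in particular the non-constant path
   sending 0 to one point and ]0,1] to the other, is a directed path of Sp(Y);
   so the inverse identity is not a map of directed spaces. *)

Import Order.TTheory GRing.Theory Num.Theory.
Local Open Scope classical_set_scope.
Local Open Scope ring_scope.

(* The initial topology of a constant map is indiscrete. *)
Notation indiscrete T := (initial_topology (fun _ : T => true)).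

Lemma continuous_to_indiscrete {S : topologicalType} {T : choiceType}
    (h : S -> indiscrete T) : continuous h.
Proof. by apply: continuous_comp_initial; exact: cst_continuous. Qed.

Section DirectedPaths.
Context {R : realType}.

Lemma vI_clamp (x : R) : 0 <= x <= 1 -> vI (clamp x) = x.
Proof. by case/andP=> x0 x1; rewrite -[RHS](min_r x1) -[in RHS](max_r x0). Qed.

Lemma vI_I0 : vI (I0 R) = 0.
Proof. by apply: vI_clamp; rewrite lexx ler01. Qed.

Lemma vI_I1 : vI (I1 R) = 1.
Proof. by apply: vI_clamp; rewrite lexx ler01. Qed.

Lemma clamp_vI (t : I01 R) : clamp (vI t) = t.
Proof.
apply: val_inj; apply: vI_clamp.
by have := set_valP t; rewrite /= in_itv.
Qed.

Lemma in_I1_id : in_I1 (@id (I01_top R)).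
Proof. by split=> // t; exact: cvg_id. Qed.

Lemma Sp_paths_md_path {X : mdspace R} {g : I01_top R -> X} :
  md_paths g -> Sp_paths X g.
Proof.
move=> gP; right; exists 1%N, (fun=> 1), (fun=> g), (fun=> id).
split=> //; split=> //; split; first by rewrite big_ord1.
split=> //; split; first by move=> _; exact: in_I1_id.
split; first by move=> i [j j1] /= ji; move: j1; rewrite ji ltnS ltn0.
move=> i t _; rewrite /moore_start big_pred0 => [|j]; last by rewrite ord1 (ord1 i).
by rewrite subr0 divr1 clamp_vI.
Qed.

Definition pathless_mdspace {T : topologicalType} (S : set T) : mdspace R :=
  @MDSpace R T S set0 (fun g (gP : set0 g) => match gP with end)
    (fun g (gP : set0 g) => match gP with end) (fun g _ gP _ => gP)
    (fun g _ (gP : set0 g) _ _ => match gP with end).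

Lemma Sp_paths_pathless {T : topologicalType} (S : set T) delta :
  Sp_paths (pathless_mdspace S) delta -> exists x, delta = fun=> x.
Proof. by case=> // -[n [_ [g [_ [n0 [_ [_ [gP _]]]]]]]]; case: (gP (Ordinal n0)). Qed.

Definition chaotic_mdspace (T : choiceType) : mdspace R :=
  @MDSpace R (indiscrete T) setT setT
    (fun g _ => continuous_to_indiscrete g) (fun _ _ => conj I I)
    (fun _ _ _ _ => I) (fun _ _ _ _ _ => I).

Lemma dspace_iso_reflect_paths {T U : topologicalType} {dT : set (I01_top R -> T)}
    {dU : set (I01_top R -> U)} {f : T -> U} {h : I01_top R -> T} :
  is_dspace_iso dT dU f -> dU (f \o h) -> dT h.
Proof.
move=> [_ [g [[_ gP] [fK _]]]] /gP.
by rewrite (_ : g \o (f \o h) = h) //; apply/funext => t /=; rewrite fK.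
Qed.

End DirectedPaths.

Theorem proposition9p2 (R : realType) :
  exists (X Y : mdspace R) (f : X -> Y),
    is_mdmap f /\ is_homeomorphism f /\
    ~ is_dspace_iso (Sp_paths X) (Sp_paths Y) f.
Proof.
pose B := indiscrete bool.
exists (pathless_mdspace [set: B]), (chaotic_mdspace bool), id.
split; first by split; [exact: continuous_to_indiscrete | split=> // g []].
split; first by split; [|exists id; split]; [exact: continuous_to_indiscrete..|].
pose step (t : I01_top R) : B := vI t == 0.
have stepY : Sp_paths (chaotic_mdspace bool) step by apply: Sp_paths_md_path.
move=> /(dspace_iso_reflect_paths (h := step)) /(_ stepY).
case/Sp_paths_pathless => x stepE.
move: (congr1 (@^~ (I0 R)) stepE) (congr1 (@^~ (I1 R)) stepE).
by rewrite /step vI_I0 vI_I1 eqxx oner_eq0 => <-.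
Qed.
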